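(* Consider Algorithm SS-SQP (described in the context) under the standing assumptions (A1), (A2). Let $\kappa_l>0$ be a constant such that for all $k$, $\Delta l(x_k,\bar\tau_k,\bar g_k,\bar d_k)\ge\kappa_l\bar\tau_k(\|\bar d_k\|^2+\|c_k\|)$ and $\Delta l(x_k,\tau_k,\nabla f_k,d_k)\ge\kappa_l\tau_k(\|d_k\|^2+\|c_k\|)$ (such a constant exists). Then for all $k\in\mathbb{N}$: (1) if $\|\bar g_k-\nabla f_k\|\le\kappa_{\mathrm{FO}}\alpha_k\sqrt{\Delta l(x_k,\bar\tau_k,\bar g_k,\bar d_k)}$, then $$|\nabla f_k^Td_k-\bar g_k^T\bar d_k|\le\left(\frac{(1+\kappa_H\zeta^{-1})\kappa_{\mathrm{FO}}\alpha_k}{\sqrt{\kappa_l\bar\tau_k}}+\frac{\kappa_{\mathrm{FO}}^2\alpha_k^2}{\zeta}\right)\Delta l(x_k,\bar\tau_k,\bar g_k,\bar d_k)$$ and $$|d_k^TH_kd_k-\bar d_k^TH_k\bar d_k|\le\left(\frac{2\kappa_H\zeta^{-1}\kappa_{\mathrm{FO}}\alpha_k}{\sqrt{\kappa_l\bar\tau_k}}+\frac{\kappa_H\kappa_{\mathrm{FO}}^2\alpha_k^2}{\zeta^2}\right)\Delta l(x_k,\bar\tau_k,\bar g_k,\bar d_k);$$ (2) if $\|\bar g_k-\nabla f_k\|\le\epsilon_g$, then $$|\nabla f_k^Td_k-\bar g_k^T\bar d_k|\le\frac{(1+\kappa_H\zeta^{-1})\epsilon_g}{\sqrt{\kappa_l\tau_k}}\sqrt{\Delta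 l(x_k,\tau_k,\nabla f_k,d_k)}+\zeta^{-1}\epsilon_g^2$$ and $$|d_k^TH_kd_k-\bar d_k^TH_k\bar d_k|\le\frac{2\kappa_H\zeta^{-1}\epsilon_g}{\sqrt{\kappa_l\tau_k}}\sqrt{\Delta l(x_k,\tau_k,\nabla f_k,d_k)}+\kappa_H\zeta^{-2}\epsilon_g^2.$$
   Context: Problem: $\min_{x\in\mathbb{R}^n}f(x)$ s.t. $c(x)=0$ with $f,c$ continuously differentiable, $c:\mathbb{R}^n\to\mathbb{R}^m$, $m\le n$; $\nabla f_k=\nabla f(x_k)$, $c_k=c(x_k)$, $J_k=\nabla c(x_k)^T$; $\|\cdot\|$ Euclidean norm. $\Delta l(x,\tau,g,d)=-\tau g^Td+\|c(x)\|_1$. $\kappa_{\mathrm{FO}},\epsilon_g\ge0$ are constants (first-order oracle parameters). Standing assumption (A1): there is an open convex set $\mathcal{X}$ containing all iterates and trial iterates; $f$ bounded below, $\nabla f$ $L$-Lipschitz and bounded, $c$ bounded, each $\nabla c_i$ Lipschitz and bounded on $\mathcal{X}$; singular values of $\nabla c(x)^T$ bounded away from zero on $\mathcal{X}$. (A2): $H_k$ symmetric, chosen independently of $\bar g_k$, $\|H_k\|\le\kappa_H$, $u^TH_ku\ge\zeta\|u\|^2$ for $u\in\mathrm{Null}(J_k)$, $\kappa_H,\zeta>0$. Algorithm SS-SQP: inputs $x_0$, $\bar\tau_{-1}>0$, $\alpha_{\max}\in(0,1]$, $\alpha_0\in(0,\alpha_{\max}]$, $\epsilon_f\ge0$, $\gamma,\theta,\sigma,\epsilon_\tau\in(0,1)$.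 At iteration $k$: random gradient estimate $\bar g_k$; solve $\begin{bmatrix}H_k & J_k^T\\ J_k&0\end{bmatrix}\begin{bmatrix}\bar d_k\\ \bar y_k\end{bmatrix}=-\begin{bmatrix}\bar g_k\\ c_k\end{bmatrix}$; $\bar\tau_k^{\rm trial}=\infty$ if $\bar g_k^T\bar d_k+\max\{\bar d_k^TH_k\bar d_k,0\}\le0$, else $(1-\sigma)\|c_k\|_1/(\bar g_k^T\bar d_k+\max\{\bar d_k^TH_k\bar d_k,0\})$; $\bar\tau_k=\bar\tau_{k-1}$ if $\bar\tau_{k-1}\le\bar\tau_k^{\rm trial}$, else $\min\{(1-\epsilon_\tau)\bar\tau_{k-1},\bar\tau_k^{\rm trial}\}$; $x_k^+=x_k+\alpha_k\bar d_k$; with objective estimates $\bar f$ and $\bar\phi(x,\tau;\xi)=\tau\bar f(x;\xi)+\|c(x)\|_1$, set $x_{k+1}=x_k^+$, $\alpha_{k+1}=\min\{\alpha_{\max},\alpha_k/\gamma\}$ if $\bar\phi(x_k^+,\bar\tau_k;\xi_k^+)\le\bar\phi(x_k,\bar\tau_k;\xi_k^0)-\alpha_k\theta\Delta l(x_k,\bar\tau_k,\bar g_k,\bar d_k)+2\bar\tau_k\epsilon_f$, else $x_{k+1}=x_k$, $\alpha_{k+1}=\gamma\alpha_k$. Deterministic quantities: $(d_k,y_k)$ solves the same system with $\bar g_k$ replaced by $\nabla f_k$; $\tau_k^{\rm trial}=\infty$ if $\nabla f_k^Td_k+\max\{d_k^TH_kd_k,0\}\le0$, else $(1-\sigma)\|c_k\|_1/(\nabla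 f_k^Td_k+\max\{d_k^TH_kd_k,0\})$; $\tau_k=\bar\tau_k$ if $\bar\tau_k\le\tau_k^{\rm trial}$, else $\tau_k=\min\{(1-\epsilon_\tau)\bar\tau_k,\tau_k^{\rm trial}\}$. *)

From HB Require Import structures.
From mathcomp Require Import all_boot all_order all_algebra.
From mathcomp Require Import all_classical all_reals all_analysis.
Set Implicit Arguments.
Unset Strict Implicit.
Unset Printing Implicit Defensive.
Import Order.TTheory GRing.Theory Num.Theory.
Import numFieldNormedType.Exports.
Local Open Scope ring_scope.
Local Open Scope classical_set_scope.

Definition dotv (R : realType) (n : nat) (u v : 'cV[R]_n) : R :=
  \sum_(i < n) u i 0 * v i 0.

Definition enorm (R : realType) (n : nat) (u : 'cV[R]_n) : R :=
  Num.sqrt (dotv u u).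

Definition norm1 (R : realType) (n : nat) (u : 'cV[R]_n) : R :=
  \sum_(i < n) `|u i 0|.

Definition Delta_l (R : realType) (m n : nat) (c : 'cV[R]_n -> 'cV[R]_m)
  (x : 'cV[R]_n) (tau : R) (g d : 'cV[R]_n) : R :=
  - tau * dotv g d + norm1 (c x).

(* trial merit parameter; None encodes +infinity *)
Definition tau_trial (R : realType) (n : nat) (sigma : R) (g d : 'cV[R]_n)
  (H : 'M[R]_n) (c1 : R) : option R :=
  let den := dotv g d + Num.max (dotv d (H *m d)) 0 in
  if den <= 0 then None else Some ((1 - sigma) * c1 / den).

Definition tau_update (R : realType) (eps_tau prev : R) (t : option R) : R :=
  match t with
  | None => prev
  | Some t => if prev <= t then prev else Num.min ((1 - eps_tau) * prev) t
  end.

Definition is_gradient (R : realType) (n : nat) (f : 'cV[R]_n -> R)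
  (gf : 'cV[R]_n -> 'cV[R]_n) : Prop :=
  forall x, differentiable f x /\ forall h, 'd f x h = dotv (gf x) h.

Definition is_jacobian (R : realType) (m n : nat) (c : 'cV[R]_n -> 'cV[R]_m)
  (Jc : 'cV[R]_n -> 'M[R]_(m, n)) : Prop :=
  forall x, differentiable c x /\ forall h, 'd c x h = Jc x *m h.

Definition convex_set (R : realType) (n : nat) (X : set 'cV[R]_n) : Prop :=
  forall a b, X a -> X b -> forall t : R, 0 <= t <= 1 -> X ((1 - t) *: a + t *: b).

From HB Require Import structures.
From mathcomp Require Import all_boot all_order all_algebra.
From mathcomp Require Import all_classical all_reals all_analysis.
From mathcomp Require Import ring lra.
Set Implicit Arguments.
Unset Strict Implicit.
Unset Printing Implicit Defensive.
Import Order.TTheory GRing.Theory Num.Theory.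
Import numFieldNormedType.Exports.
Local Open Scope ring_scope.
Local Open Scope classical_set_scope.

(* Write u := d_k - dbar_k.  Both steps solve the same KKT system except for
   the gradient, so J_k u = 0 and H_k u = gbar_k - grad f_k modulo range(J_k^T);
   curvature of H_k on Null(J_k) then gives ||u|| <= ||gbar_k - grad f_k|| / zeta.
   The two differences to be estimated are bilinear in u and the steps:
     grad f_k^T d_k - gbar_k^T dbar_k = (grad f_k - gbar_k)^T d_k - dbar_k^T H_k u,
     d_k^T H_k d_k - dbar_k^T H_k dbar_k = 2 dbar_k^T H_k u + u^T H_k u,
   and, by symmetry, the same with the roles of the two steps exchanged.
   Cauchy-Schwarz and ||H_k|| <= kappa_H bound them by the gradient error and
   the length of the reference step, which the Delta l lower bound controls by
   sqrt(Delta l) / sqrt(kappa_l tau): one uses the stochastic step as reference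
   in case (1) and the deterministic one in case (2). *)

Section DotProduct.
Variables (R : realType) (n : nat).
Implicit Types (u v w : 'cV[R]_n) (a : R).

Lemma dotvC u v : dotv u v = dotv v u.
Proof. by apply: eq_bigr => i _; rewrite mulrC. Qed.

Lemma dotvDl u v w : dotv (u + v) w = dotv u w + dotv v w.
Proof. by rewrite /dotv -big_split; apply: eq_bigr => i _; rewrite !mxE mulrDl. Qed.

Lemma dotvNl u v : dotv (- u) v = - dotv u v.
Proof. by rewrite /dotv -sumrN; apply: eq_bigr => i _; rewrite !mxE mulNr. Qed.

Lemma dotvZl a u v : dotv (a *: u) v = a * dotv u v.
Proof. by rewrite /dotv mulr_sumr; apply: eq_bigr => i _; rewrite !mxE mulrA. Qed.

Lemma dotvBl u v w : dotv (u - v) w = dotv u w - dotv v w.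
Proof. by rewrite dotvDl dotvNl. Qed.

Lemma dotvDr u v w : dotv w (u + v) = dotv w u + dotv w v.
Proof. by rewrite !(dotvC w) dotvDl. Qed.

Lemma dotvBr u v w : dotv w (u - v) = dotv w u - dotv w v.
Proof. by rewrite !(dotvC w) dotvBl. Qed.

Lemma dotvZr a u v : dotv v (a *: u) = a * dotv v u.
Proof. by rewrite !(dotvC v) dotvZl. Qed.

Lemma dotv0r u : dotv u 0 = 0.
Proof. by rewrite /dotv big1 // => i _; rewrite mxE mulr0. Qed.

Lemma dotvv_ge0 u : 0 <= dotv u u.
Proof. by apply: sumr_ge0 => i _; rewrite -expr2 sqr_ge0. Qed.

Lemma dotvv_eq0 u : dotv u u = 0 -> u = 0.
Proof.
move=> /eqP; rewrite psumr_eq0 => [/allP u0|i _]; last by rewrite -expr2 sqr_ge0.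
apply/matrixP => i j; rewrite (ord1 j) mxE.
by have := u0 i (mem_index_enum i); rewrite /= mulf_eq0 orbb => /eqP.
Qed.

Lemma enorm_ge0 u : 0 <= enorm u.
Proof. exact: sqrtr_ge0. Qed.

Lemma enormBC u v : enorm (u - v) = enorm (v - u).
Proof. by rewrite /enorm -opprB dotvNl dotvC dotvNl opprK. Qed.

Lemma dotv_CauchySchwarz u v : dotv u v ^+ 2 <= dotv u u * dotv v v.
Proof.
set a := dotv u u; set b := dotv v v; set c := dotv u v.
have [b0 | b_neq0] := eqVneq b 0.
  by rewrite /c (dotvv_eq0 b0) dotv0r b0 expr0n mulr0.
have b_gt0 : 0 < b by rewrite lt_def b_neq0 dotvv_ge0.
have := dotvv_ge0 (b *: u - c *: v).
rewrite !(dotvBl, dotvBr, dotvZl, dotvZr) -/a -/b -/c (dotvC v u) -/c => h.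
have : 0 <= b * (a * b - c ^+ 2) by nra.
by rewrite pmulr_rge0 // subr_ge0 mulrC.
Qed.

Lemma normr_dotv_le u v : `|dotv u v| <= enorm u * enorm v.
Proof.
rewrite /enorm -sqrtrM ?dotvv_ge0 // -sqrtr_sqr ler_sqrt ?dotv_CauchySchwarz //.
by rewrite mulr_ge0 ?dotvv_ge0.
Qed.

End DotProduct.

Lemma dotv_mulmx (R : realType) (p q : nat) (A : 'M[R]_(p, q)) u v :
  dotv (A *m u) v = dotv u (A^T *m v).
Proof.
have dotvE k (a b : 'cV[R]_k) : dotv a b = (a^T *m b) 0 0.
  by rewrite mxE; apply: eq_bigr => i _; rewrite mxE.
by rewrite !dotvE trmx_mul mulmxA.
Qed.

Lemma dotv_quadD (R : realType) (n : nat) (A : 'M[R]_n) (u v : 'cV[R]_n) :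
  A^T = A ->
  dotv (u + v) (A *m (u + v))
    = dotv u (A *m u) + 2 * dotv u (A *m v) + dotv v (A *m v).
Proof.
move=> AT; rewrite mulmxDr !dotvDl !dotvDr [dotv v (A *m u)]dotvC dotv_mulmx AT.
by ring.
Qed.

Lemma normr_dotv_mulmx_le (R : realType) (n : nat) (A : 'M[R]_n) (kA : R) u v :
  (forall w, enorm (A *m w) <= kA * enorm w) ->
  `|dotv u (A *m v)| <= kA * enorm u * enorm v.
Proof.
move=> A_le; rewrite mulrAC; apply: le_trans (normr_dotv_le _ _) _.
by rewrite mulrC ler_wpM2r ?enorm_ge0.
Qed.

Lemma norm1_eq0 (R : realType) (m : nat) (v : 'cV[R]_m) : norm1 v = 0 -> v = 0.
Proof.
move=> /eqP; rewrite psumr_eq0 // => /allP v0.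
apply/matrixP => i j; rewrite (ord1 j) mxE.
by have := v0 i (mem_index_enum i); rewrite /= normr_eq0 => /eqP.
Qed.

Definition kkt_solution (R : realType) (m n : nat) (H : 'M[R]_n) (J : 'M[R]_(m, n))
    (g : 'cV[R]_n) (c : 'cV[R]_m) (d : 'cV[R]_n) (y : 'cV[R]_m) : Prop :=
  H *m d + J^T *m y = - g /\ J *m d = - c.

Lemma dotv_kkt_null (R : realType) (m n : nat) (H : 'M[R]_n) (J : 'M[R]_(m, n))
    g c d y (v : 'cV[R]_n) :
  H^T = H -> kkt_solution H J g c d y -> J *m v = 0 ->
  dotv g v = - dotv d (H *m v).
Proof.
move=> HT [kkt_g _] Jv.
by rewrite -[g]opprK -kkt_g dotvNl dotvDl !dotv_mulmx HT trmxK Jv dotv0r addr0.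
Qed.

Lemma tau_trial_gt0 (R : realType) (m n : nat) (H : 'M[R]_n) (J : 'M[R]_(m, n))
    (sigma : R) g c d y s :
  0 < sigma < 1 -> H^T = H ->
  (forall u, J *m u = 0 -> 0 <= dotv u (H *m u)) ->
  kkt_solution H J g c d y -> tau_trial sigma g d H (norm1 c) = Some s -> 0 < s.
Proof.
move=> /andP[_ sigma_lt1] HT H_psd kkt; rewrite /tau_trial.
case: ifPn => //; rewrite -ltNge => den_gt0 [<-].
have [c0 | c_neq0] := eqVneq (norm1 c) 0; last first.
  by rewrite divr_gt0 // mulr_gt0 ?subr_gt0 // lt_def c_neq0 sumr_ge0.
(* a feasible point leaves no positive denominator *)
have Jd : J *m d = 0 by rewrite kkt.2 (norm1_eq0 c0) oppr0.
move: den_gt0; rewrite (dotv_kkt_null HT kkt Jd) max_l ?H_psd //.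
by rewrite addNr ltxx.
Qed.

Lemma tau_update_gt0 (R : realType) (eps prev : R) t :
  0 < eps < 1 -> 0 < prev -> (forall s, t = Some s -> 0 < s) ->
  0 < tau_update eps prev t.
Proof.
move=> /andP[_ eps_lt1] prev_gt0; case: t => [s|] //= /(_ s erefl) s_gt0.
by case: ifP => // _; rewrite lt_min s_gt0 mulr_gt0 ?subr_gt0.
Qed.

Lemma tau_update_trial_gt0 (R : realType) (m n : nat) (H : 'M[R]_n)
    (J : 'M[R]_(m, n)) (eps sigma prev : R) g c d y :
  0 < eps < 1 -> 0 < sigma < 1 -> H^T = H ->
  (forall u, J *m u = 0 -> 0 <= dotv u (H *m u)) ->
  kkt_solution H J g c d y -> 0 < prev ->
  0 < tau_update eps prev (tau_trial sigma g d H (norm1 c)).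
Proof.
move=> eps_bnd sigma_bnd HT H_psd kkt prev_gt0; apply: tau_update_gt0 => // s.
exact: tau_trial_gt0 sigma_bnd HT H_psd kkt.
Qed.

Lemma le_sqrt_div_of_mulD_le (R : realType) (a b x D : R) :
  0 < a -> 0 <= b -> 0 <= x -> a * (x ^+ 2 + b) <= D ->
  x <= Num.sqrt D / Num.sqrt a.
Proof.
move=> a_gt0 b_ge0 x_ge0 le_D.
rewrite ler_pdivlMr ?sqrtr_gt0 // -[x]ger0_norm // -sqrtr_sqr -sqrtrM ?sqr_ge0 //.
by rewrite ler_sqrt; nra.
Qed.

Section KKTPerturbation.
Variables (R : realType) (m n : nat) (H : 'M[R]_n) (J : 'M[R]_(m, n)).
Variables (kH zeta : R) (c : 'cV[R]_m).
Hypothesis HT : H^T = H.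
Hypothesis H_le : forall u, enorm (H *m u) <= kH * enorm u.
Hypothesis H_curv : forall u, J *m u = 0 -> zeta * enorm u ^+ 2 <= dotv u (H *m u).
Hypothesis kH_ge0 : 0 <= kH.
Hypothesis zeta_gt0 : 0 < zeta.

Variables (g1 g2 d1 d2 : 'cV[R]_n) (y1 y2 : 'cV[R]_m).
Hypothesis kkt1 : kkt_solution H J g1 c d1 y1.
Hypothesis kkt2 : kkt_solution H J g2 c d2 y2.

Let u := d2 - d1.

Let Ju : J *m u = 0.
Proof. by rewrite mulmxBr kkt1.2 kkt2.2 subrr. Qed.

Let quad_u : dotv u (H *m u) = dotv (g1 - g2) u.
Proof.
rewrite dotvBl (dotv_kkt_null HT kkt1 Ju) (dotv_kkt_null HT kkt2 Ju).
by rewrite dotvC dotv_mulmx HT dotvBl; ring.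
Qed.

Lemma kkt_step_diff_le : enorm (d2 - d1) <= enorm (g1 - g2) / zeta.
Proof.
rewrite -/u.
have nu_ge0 := enorm_ge0 u; have e_ge0 := enorm_ge0 (g1 - g2).
have : zeta * enorm u ^+ 2 <= enorm (g1 - g2) * enorm u.
  apply: le_trans (H_curv Ju) _; rewrite quad_u.
  exact: le_trans (ler_norm _) (normr_dotv_le _ _).
have [-> | nu_neq0] := eqVneq (enorm u) 0.
  by move=> _; rewrite divr_ge0 // ltW.
have nu_gt0 : 0 < enorm u by rewrite lt_def nu_neq0.
by rewrite ler_pdivlMr // expr2 mulrA ler_pM2r // mulrC.
Qed.

Variables (E D : R).
Hypothesis grad_err_le : enorm (g1 - g2) <= E.
Hypothesis d1_le : enorm d1 <= D.


Let u_le : enorm u <= E / zeta.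
Proof.
by apply: le_trans kkt_step_diff_le _; rewrite ler_pM2r ?invr_gt0.
Qed.
Lemma dotv_grad_step_diff_le :
  `|dotv g2 d2 - dotv g1 d1| <= (1 + kH / zeta) * E * D + E ^+ 2 / zeta.
Proof.
have -> : dotv g2 d2 - dotv g1 d1
          = dotv (g2 - g1) d1 + dotv (g2 - g1) u - dotv d1 (H *m u).
  by rewrite -(dotv_kkt_null HT kkt1 Ju) -dotvDr /u subrKC !dotvBl dotvBr; ring.
have e_ge0 := enorm_ge0 (g1 - g2); have nu_ge0 := enorm_ge0 u.
have nd_ge0 := enorm_ge0 d1.
have h1 := normr_dotv_le (g2 - g1) d1; have h2 := normr_dotv_le (g2 - g1) u.
have h3 := normr_dotv_mulmx_le d1 u H_le.
rewrite enormBC in h1 h2.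
have p1 : enorm (g1 - g2) * enorm d1 <= E * D by rewrite ler_pM.
have p2 : enorm (g1 - g2) * enorm u <= E * (E / zeta) by rewrite ler_pM // u_le.
have p3 : kH * enorm d1 * enorm u <= kH * D * (E / zeta).
  by rewrite ler_pM ?mulr_ge0 ?ler_wpM2l.
have -> : (1 + kH / zeta) * E * D + E ^+ 2 / zeta
          = E * D + E * (E / zeta) + kH * D * (E / zeta) by field; rewrite gt_eqF.
apply: le_trans (ler_normB _ _) _.
apply: le_trans (lerD (ler_normD _ _) h3) _; lra.
Qed.

Lemma quad_step_diff_le :
  `|dotv d2 (H *m d2) - dotv d1 (H *m d1)|
    <= 2 * kH / zeta * E * D + kH * E ^+ 2 / zeta ^+ 2.
Proof.
have -> : dotv d2 (H *m d2) - dotv d1 (H *m d1)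
          = 2 * dotv d1 (H *m u) + dotv u (H *m u).
  by rewrite -[in LHS](subrKC d1 d2) dotv_quadD // -/u; ring.
have nu_ge0 := enorm_ge0 u; have nd_ge0 := enorm_ge0 d1.
have h1 := normr_dotv_mulmx_le d1 u H_le; have h2 := normr_dotv_mulmx_le u u H_le.
have p1 : kH * enorm d1 * enorm u <= kH * D * (E / zeta).
  by rewrite ler_pM ?mulr_ge0 ?ler_wpM2l.
have p2 : kH * enorm u * enorm u <= kH * (E / zeta) * (E / zeta).
  by rewrite ler_pM ?mulr_ge0 ?ler_wpM2l.
have -> : 2 * kH / zeta * E * D + kH * E ^+ 2 / zeta ^+ 2
          = 2 * (kH * D * (E / zeta)) + kH * (E / zeta) * (E / zeta).
  by field; rewrite gt_eqF.
apply: le_trans (ler_normD _ _) _; rewrite normrM ger0_norm //; lra.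
Qed.

End KKTPerturbation.

Theorem lemma3p16 (R : realType) (m n : nat) (Hmn : (m <= n)%N)
  (* problem data *)
  (f : 'cV[R]_n -> R) (gf : 'cV[R]_n -> 'cV[R]_n)
  (c : 'cV[R]_n -> 'cV[R]_m) (Jc : 'cV[R]_n -> 'M[R]_(m, n))
  (* algorithm inputs *)
  (x0 : 'cV[R]_n) (taub_init alpha_max alpha0 eps_f gamma theta sigma eps_tau : R)
  (* oracle constants *)
  (kappa_FO eps_g : R)
  (* constants of (A2) and kappa_l *)
  (kappa_H zeta kappa_l : R)
  (* iterates and algorithm quantities (one realization) *)
  (x : nat -> 'cV[R]_n) (alpha : nat -> R)
  (gb : nat -> 'cV[R]_n) (H : nat -> 'M[R]_n)
  (db : nat -> 'cV[R]_n) (yb : nat -> 'cV[R]_m) (taub : nat -> R)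
  (fb0 fbp : nat -> R)
  (* deterministic quantities *)
  (d : nat -> 'cV[R]_n) (y : nat -> 'cV[R]_m) (tau : nat -> R)
  (X : set 'cV[R]_n) :
  (* parameter ranges *)
  0 < taub_init -> 0 < alpha_max <= 1 -> 0 < alpha0 <= alpha_max -> 0 <= eps_f ->
  0 < gamma < 1 -> 0 < theta < 1 -> 0 < sigma < 1 -> 0 < eps_tau < 1 ->
  0 <= kappa_FO -> 0 <= eps_g ->
  (* (A1) *)
  is_gradient f gf -> continuous gf ->
  is_jacobian c Jc -> continuous Jc ->
  open X -> convex_set X ->
  (forall k, X (x k) /\ X (x k + alpha k *: db k)) ->
  (exists flow : R, forall z, X z -> flow <= f z) ->
  (exists L : R, forall z w, X z -> X w -> enorm (gf z - gf w) <= L * enorm (z - w)) ->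
  (exists B : R, forall z, X z -> enorm (gf z) <= B) ->
  (exists B : R, forall z, X z -> enorm (c z) <= B) ->
  (forall i : 'I_m, exists L : R, forall z w, X z -> X w ->
      enorm ((row i (Jc z))^T - (row i (Jc w))^T) <= L * enorm (z - w)) ->
  (forall i : 'I_m, exists B : R, forall z, X z -> enorm ((row i (Jc z))^T) <= B) ->
  (exists s : R, 0 < s /\ forall z, X z -> forall v : 'cV[R]_m,
      s * enorm v <= enorm ((Jc z)^T *m v)) ->
  (* (A2) *)
  0 < kappa_H -> 0 < zeta ->
  (forall k, (H k)^T = H k) ->
  (forall k (u : 'cV[R]_n), enorm (H k *m u) <= kappa_H * enorm u) ->
  (forall k (u : 'cV[R]_n), Jc (x k) *m u = 0 ->
      zeta * enorm u ^+ 2 <= dotv u (H k *m u)) ->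
  (* Algorithm SS-SQP *)
  x 0%N = x0 -> alpha 0%N = alpha0 ->
  (forall k, H k *m db k + (Jc (x k))^T *m yb k = - gb k /\
             Jc (x k) *m db k = - c (x k)) ->
  (forall k, taub k = tau_update eps_tau
       (if k is k'.+1 then taub k' else taub_init)
       (tau_trial sigma (gb k) (db k) (H k) (norm1 (c (x k))))) ->
  (forall k, let xp := x k + alpha k *: db k in
     if taub k * fbp k + norm1 (c xp)
        <= taub k * fb0 k + norm1 (c (x k))
           - alpha k * theta * Delta_l c (x k) (taub k) (gb k) (db k)
           + 2 * taub k * eps_f
     then x k.+1 = xp /\ alpha k.+1 = Num.min alpha_max (alpha k / gamma)
     else x k.+1 = x k /\ alpha k.+1 = gamma * alpha k) ->
  (* deterministic quantities *)
  (forall k, H k *m d k + (Jc (x k))^T *m y k = - gf (x k) /\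
             Jc (x k) *m d k = - c (x k)) ->
  (forall k, tau k = tau_update eps_tau (taub k)
       (tau_trial sigma (gf (x k)) (d k) (H k) (norm1 (c (x k))))) ->
  (* the constant kappa_l *)
  0 < kappa_l ->
  (forall k, Delta_l c (x k) (taub k) (gb k) (db k)
               >= kappa_l * taub k * (enorm (db k) ^+ 2 + enorm (c (x k)))) ->
  (forall k, Delta_l c (x k) (tau k) (gf (x k)) (d k)
               >= kappa_l * tau k * (enorm (d k) ^+ 2 + enorm (c (x k)))) ->
  forall k : nat,
  let Dlb := Delta_l c (x k) (taub k) (gb k) (db k) in
  let Dl := Delta_l c (x k) (tau k) (gf (x k)) (d k) in
  let err := enorm (gb k - gf (x k)) in
  (err <= kappa_FO * alpha k * Num.sqrt Dlb ->
     `|dotv (gf (x k)) (d k) - dotv (gb k) (db k)|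
       <= ((1 + kappa_H / zeta) * kappa_FO * alpha k / Num.sqrt (kappa_l * taub k)
           + kappa_FO ^+ 2 * alpha k ^+ 2 / zeta) * Dlb
     /\
     `|dotv (d k) (H k *m d k) - dotv (db k) (H k *m db k)|
       <= (2 * kappa_H / zeta * kappa_FO * alpha k / Num.sqrt (kappa_l * taub k)
           + kappa_H * kappa_FO ^+ 2 * alpha k ^+ 2 / zeta ^+ 2) * Dlb)
  /\
  (err <= eps_g ->
     `|dotv (gf (x k)) (d k) - dotv (gb k) (db k)|
       <= (1 + kappa_H / zeta) * eps_g / Num.sqrt (kappa_l * tau k) * Num.sqrt Dl
          + eps_g ^+ 2 / zeta
     /\
     `|dotv (d k) (H k *m d k) - dotv (db k) (H k *m db k)|
       <= 2 * kappa_H / zeta * eps_g / Num.sqrt (kappa_l * tau k) * Num.sqrt Dl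
          + kappa_H * eps_g ^+ 2 / zeta ^+ 2).
Proof.
(* Only the merit parameter recursion, the two KKT systems and (A2) matter:
   both estimates are pointwise in k. *)
move=> taub_init_gt0 _ _ _ _ _ sigma_bnd eps_tau_bnd _ _ _ _ _ _ _ _ _ _ _ _ _ _ _ _
  kH_gt0 zeta_gt0 HT H_le H_curv _ _ kkt_b taub_def _ kkt_d tau_def
  kl_gt0 Dlb_ge Dl_ge k Dlb Dl err.
have H_psd j u : Jc (x j) *m u = 0 -> 0 <= dotv u (H j *m u).
  by move=> Ju; apply: le_trans (H_curv j u Ju); rewrite mulr_ge0 ?sqr_ge0 ?ltW.
have taub_gt0 j : 0 < taub j.
  elim: j => [|j IH]; rewrite taub_def;
  exact: tau_update_trial_gt0 eps_tau_bnd sigma_bnd (HT _) (H_psd _) (kkt_b _) _.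
have tau_gt0 : 0 < tau k.
  rewrite tau_def.
  exact: tau_update_trial_gt0 eps_tau_bnd sigma_bnd (HT _) (H_psd _) (kkt_d _)
    (taub_gt0 k).
have klt_gt0 t : 0 < t -> 0 < kappa_l * t by move=> t_gt0; rewrite mulr_gt0.
have db_le := le_sqrt_div_of_mulD_le (klt_gt0 _ (taub_gt0 k))
  (enorm_ge0 _) (enorm_ge0 _) (Dlb_ge k).
have d_le := le_sqrt_div_of_mulD_le (klt_gt0 _ tau_gt0)
  (enorm_ge0 _) (enorm_ge0 _) (Dl_ge k).
have sqrt_klt_neq0 t : 0 < t -> Num.sqrt (kappa_l * t) != 0.
  by move=> t_gt0; rewrite gt_eqF // sqrtr_gt0 klt_gt0.
have le_eq (a b : R) : a = b -> a <= b by move=> ->.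
split=> [err_le | err_le].
  have Dlb_sqr : Dlb = Num.sqrt Dlb ^+ 2.
    rewrite sqr_sqrtr //; apply: le_trans (Dlb_ge k).
    by rewrite mulr_ge0 ?addr_ge0 ?sqr_ge0 ?enorm_ge0 ?ltW ?klt_gt0.
  split.
  - apply: le_trans (dotv_grad_step_diff_le (HT k) (H_le k) (H_curv k) (ltW kH_gt0)
      zeta_gt0 (kkt_b k) (kkt_d k) err_le db_le) _.
    apply: le_eq; rewrite [in RHS]Dlb_sqr.
    by field; rewrite gt_eqF ?sqrt_klt_neq0.
  - apply: le_trans (quad_step_diff_le (HT k) (H_le k) (H_curv k) (ltW kH_gt0)
      zeta_gt0 (kkt_b k) (kkt_d k) err_le db_le) _.
    apply: le_eq; rewrite [in RHS]Dlb_sqr.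
    by field; rewrite gt_eqF ?sqrt_klt_neq0.
rewrite /err enormBC in err_le.
split; rewrite distrC.
- apply: le_trans (dotv_grad_step_diff_le (HT k) (H_le k) (H_curv k) (ltW kH_gt0)
    zeta_gt0 (kkt_d k) (kkt_b k) err_le d_le) _.
  by apply: le_eq; field; rewrite gt_eqF ?sqrt_klt_neq0.
- apply: le_trans (quad_step_diff_le (HT k) (H_le k) (H_curv k) (ltW kH_gt0)
    zeta_gt0 (kkt_d k) (kkt_b k) err_le d_le) _.
  by apply: le_eq; field; rewrite gt_eqF ?sqrt_klt_neq0.
Qed.
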